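(* Let $(M,h)$ be a Riemannian manifold, $p\in C^\infty(M)$, $\omega^\sharp$ the $h$-gradient of $p$, $\bar g>0$, and $\mathbf{G}^T=-\bar g\,\omega^\sharp$. Fix $x\in M$ and $\tilde\eta\in(0,1]$, put $b=\|\omega^\sharp\|_h(x)$, and assume $\tilde\eta\|\mathbf{G}^T\|_h(x)<1$ (i.e. $\tilde\eta\bar g b<1$). Let $\phi(s)=\frac{1}{1+\tilde\eta\bar g s}$ for $|s|\le b$. Then the following are equivalent: (i) $\phi(s)-s\phi'(s)+(b^2-s^2)\phi''(s)>0$ for all $s$ with $|s|\le b$; (ii) $|s|\le b<b_0$ for all such $s$, where $b_0=\frac{1}{2\tilde\eta\bar g}$; (iii) $\|\mathbf{G}^T\|_h(x)<\frac{1}{2\tilde\eta}$.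
   Context: Here $s$ plays the role of $\beta/\alpha$ with $\alpha=\sqrt{h(y,y)}$, $\beta=h(y,\omega^\sharp)$, $y\in T_xM\setminus\{0\}$, so that $|s|\le b$ by Cauchy–Schwarz; note $\|\mathbf{G}^T\|_h=\bar g\,b$. *)

From HB Require Import structures.
From mathcomp Require Import all_boot all_order all_algebra.
From mathcomp Require Import all_classical all_reals all_analysis.
Set Implicit Arguments. Unset Strict Implicit. Unset Printing Implicit Defensive.
Import Order.TTheory GRing.Theory Num.Theory numFieldNormedType.Exports.
Local Open Scope ring_scope.

Definition phi (R : realType) (eta gbar : R) (s : R) : R :=
  (1 + eta * gbar * s)^-1.

From HB Require Import structures.
From mathcomp Require Import all_boot all_order all_algebra.
From mathcomp Require Import all_classical all_reals all_analysis.
From mathcomp Require Import ring lra.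

(* With c := eta * gbar we have phi' = - c phi^2 and phi'' = 2 c^2 phi^3, so
   the regularity expression factors as phi(s)^3 (1 + 3 c s + 2 c^2 b^2).
   Since c b < 1, phi is positive on [-b, b], and the affine factor is
   smallest at s = - b, where it equals (1 - c b) (1 - 2 c b); hence (i)
   holds iff 2 c b < 1, which is b < 1 / (2 eta gbar), and also
   |G^T| = gbar b < 1 / (2 eta). *)

Set Implicit Arguments.
Unset Strict Implicit.
Unset Printing Implicit Defensive.

Import Order.TTheory GRing.Theory Num.Theory numFieldNormedType.Exports.
Local Open Scope ring_scope.

(* Positivity of this expression on [-b, b] is the condition for
   alpha * f (beta / alpha) to be a Finsler (alpha, beta)-metric. *)
Definition alpha_beta_regularity (R : realType) (f : R -> R) (b s : R) : R :=
  f s - s * derive1 f s + (b ^+ 2 - s ^+ 2) * derive1n 2 f s.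

Section PhiDerivatives.
Variables (R : realType) (eta gbar : R).
Local Notation c := (eta * gbar).

Lemma is_derive_affine (x : R) : is_derive x 1 (fun s : R => 1 + c * s) c.
Proof. by apply: is_derive_eq; rewrite add0r mul1r [_%:A]mulr1. Qed.

Lemma near_affine_neq0 (x : R) :
  1 + c * x != 0 -> \forall t \near x, 1 + c * t != 0.
Proof.
move=> nz; apply: (@cvgr_neq0 _ R _ (nbhs x) _ (fun t => 1 + c * t) _ _ nz).
by apply: cvgD; [exact: cvg_cst | apply: cvgM; [exact: cvg_cst | exact: cvg_id]].
Qed.

Lemma is_derive_phi (x : R) : 1 + c * x != 0 ->
  is_derive x 1 (phi eta gbar) (- c * phi eta gbar x ^+ 2).
Proof.
move=> nz.
have := @is_deriveV R (fun s => 1 + c * s) x c 1 nz (is_derive_affine x).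
suff -> : - c * phi eta gbar x ^+ 2 = - (1 + c * x) ^- 2 *: c by [].
by rewrite /phi exprVn scaleNr mulNr [_ *: _]mulrC.
Qed.

Lemma derive1_phi (x : R) : 1 + c * x != 0 ->
  derive1 (phi eta gbar) x = - c * phi eta gbar x ^+ 2.
Proof. by move=> /is_derive_phi dphi; rewrite derive1E derive_val. Qed.

Lemma derive1n2_phi (x : R) : 1 + c * x != 0 ->
  derive1n 2 (phi eta gbar) x = 2 * c ^+ 2 * phi eta gbar x ^+ 3.
Proof.
move=> nz; rewrite derive1nS derive1n1 derive1E.
(* phi is not differentiable at - 1 / c, so the formula for phi' only holds
   on a neighbourhood of x. *)
have d1E : \forall t \near x, derive1 (phi eta gbar) t = - c * phi eta gbar t ^+ 2.
  by near do rewrite derive1_phi //; exact: near_affine_neq0.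
rewrite (near_eq_derive _ d1E).
have dsq := is_deriveZ (- c) (is_deriveX 2 (is_derive_phi nz)).
rewrite -[fun t => _]/(- c \*: phi eta gbar ^+ 2) derive_val.
rewrite -[LHS]/(- c * (2 * phi eta gbar x * (- c * phi eta gbar x ^+ 2))).
ring.
Unshelve. all: by end_near. Qed.

Lemma alpha_beta_regularity_phiE (b s : R) : 1 + c * s != 0 ->
  alpha_beta_regularity (phi eta gbar) b s
  = phi eta gbar s ^+ 3 * (1 + 3 * c * s + 2 * c ^+ 2 * b ^+ 2).
Proof.
move=> nz; rewrite /alpha_beta_regularity derive1_phi // derive1n2_phi //.
by rewrite /phi; field.
Qed.

End PhiDerivatives.

Lemma affine_gt0_on_interval_iff (R : realFieldType) (c b : R) :
  0 <= c -> 0 <= b -> c * b < 1 ->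
  (forall s, `|s| <= b -> 0 < 1 + 3 * c * s + 2 * c ^+ 2 * b ^+ 2)
  <-> 2 * c * b < 1.
Proof.
move=> c_ge0 b_ge0 cb_lt1.
have minE s : 1 + 3 * c * s + 2 * c ^+ 2 * b ^+ 2
              = (1 - c * b) * (1 - 2 * c * b) + 3 * c * (s + b) by ring.
split=> [pos | cb2_lt1 s].
- have /pos : `|- b| <= b by rewrite normrN ger0_norm.
  by rewrite minE addNr mulr0 addr0 pmulr_rgt0 ?subr_gt0.
- rewrite ler_norml minE => /andP[Nb_le_s _].
  apply: ltr_pwDl; first by rewrite mulr_gt0 ?subr_gt0.
  by rewrite !mulr_ge0 ?ler0n // -lerBlDr sub0r.
Qed.

Lemma forall_interval_andr (R : realDomainType) (b : R) (P : Prop) :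
  0 <= b -> (forall s : R, `|s| <= b -> `|s| <= b /\ P) <-> P.
Proof.
move=> b_ge0; split=> [H | p s bs]; last by [].
by have [] := H 0; rewrite ?normr0.
Qed.

Theorem lemma3p1 (R : realType) (V : normedModType R) (w : V)
  (eta gbar : R) (heta0 : 0 < eta) (heta1 : eta <= 1) (hg : 0 < gbar)
  (hsmall : eta * `|(- gbar) *: w| < 1) :
  let b := `|w| in
  ((forall s : R, `|s| <= b ->
      0 < phi eta gbar s - s * derive1 (phi eta gbar) s
            + (b ^+ 2 - s ^+ 2) * derive1n 2 (phi eta gbar) s)
   <-> (forall s : R, `|s| <= b -> `|s| <= b /\ b < (2 * eta * gbar)^-1))
  /\
  ((forall s : R, `|s| <= b -> `|s| <= b /\ b < (2 * eta * gbar)^-1)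
   <-> `|(- gbar) *: w| < (2 * eta)^-1).
Proof.
move=> b; set c := eta * gbar.
have b_ge0 : 0 <= b := normr_ge0 w.
have c_gt0 : 0 < c by rewrite mulr_gt0.
have normG : `|(- gbar) *: w| = gbar * b by rewrite normrZ normrN gtr0_norm.
have cb_lt1 : c * b < 1 by rewrite -mulrA -normG.
have denom_gt0 s : `|s| <= b -> 0 < 1 + c * s.
  rewrite ler_norml => /andP[Nb_le_s _].
  have : c * - b <= c * s by rewrite ler_wpM2l // ltW.
  by rewrite mulrN; lra.
have i_iff : (forall s : R, `|s| <= b ->
      0 < alpha_beta_regularity (phi eta gbar) b s) <-> 2 * c * b < 1.
  rewrite -affine_gt0_on_interval_iff ?(ltW c_gt0) //.
  split=> pos s bs; have ds := denom_gt0 s bs; move: (pos s bs);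
    rewrite alpha_beta_regularity_phiE ?lt0r_neq0 //;
    by rewrite pmulr_rgt0 // exprn_gt0 // invr_gt0.
have ii_iff : (forall s : R, `|s| <= b -> `|s| <= b /\ b < (2 * eta * gbar)^-1)
    <-> 2 * c * b < 1.
  apply: iff_trans; first exact: forall_interval_andr.
  by rewrite -[X in _ < X]mulr1 ltr_pdivlMl ?mulrA // -mulrA mulr_gt0.
have iii_iff : `|(- gbar) *: w| < (2 * eta)^-1 <-> 2 * c * b < 1.
  by rewrite -[X in _ < X]mulr1 ltr_pdivlMl ?mulr_gt0 // normG !mulrA.
split.
- exact: iff_trans i_iff (iff_sym ii_iff).
- exact: iff_trans ii_iff (iff_sym iii_iff).
Qed.
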